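(* Let $V_0>0$, $\alpha_1,\alpha_2>0$, $\delta_1\in\mathbb R$, and let $\gamma_1 = 1+\frac{1}{\mu}$, $\gamma_2 = 1-\frac{1}{\mu}$ for some $\mu>1$. Define \[ I \coloneqq \int_{V_0}^{0}\frac{dV}{-\alpha_1V^{\gamma_1}-\alpha_2V^{\gamma_2}+\delta_1V}. \] Then: (i) If $0\leq \delta_1<2\sqrt{\alpha_1\alpha_2}$, then \[ I\leq \frac{\mu}{\alpha_1k_1}\left(\frac{\pi}{2}-\tan^{-1}k_2\right), \] where $k_1 = \sqrt{\frac{4\alpha_1\alpha_2-\delta_1^2}{4\alpha_1^2}}$ and $k_2 = -\frac{\delta_1}{\sqrt{4\alpha_1\alpha_2-\delta_1^2}}$. (ii) If $\delta_1\geq 2\sqrt{\alpha_1\alpha_2}$ and $V_0^{1/\mu}\leq k\,\frac{\delta_1-\sqrt{\delta_1^2-4\alpha_1\alpha_2}}{2\alpha_1}$ for some $0<k<1$, then \[ I \leq \frac{\mu k}{(1-k)\sqrt{\alpha_1\alpha_2}}. \]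
   Context: $\tan^{-1}$ denotes the principal branch of the inverse tangent, with values in $(-\pi/2,\pi/2)$. *)

From HB Require Import structures.
From mathcomp Require Import all_boot all_order all_algebra.
From mathcomp Require Import all_classical all_reals all_analysis.
Set Implicit Arguments. Unset Strict Implicit. Unset Printing Implicit Defensive.
Import Order.TTheory GRing.Theory Num.Theory.
Import numFieldNormedType.Exports.
Local Open Scope classical_set_scope.
Local Open Scope ring_scope.

(* I = \int_{V0}^{0} dV / (-a1 V^g1 - a2 V^g2 + d1 V), i.e. minus the
   (Lebesgue) integral over ]0, V0] of the integrand; value in \bar R. *)
Definition integralI {R : realType} (V0 a1 a2 d1 g1 g2 : R) : \bar R :=
  (- \int[@lebesgue_measure R]_(V in `]0%R, V0])
        ((- a1 * V `^ g1 - a2 * V `^ g2 + d1 * V)^-1)%:E)%E.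

From HB Require Import structures.
From mathcomp Require Import all_boot all_order all_algebra.
From mathcomp Require Import all_classical all_reals all_analysis.
From mathcomp Require Import ring lra.
Import Order.TTheory GRing.Theory Num.Theory.
Import numFieldNormedType.Exports.
Local Open Scope classical_set_scope.
Local Open Scope ring_scope.

(* Substituting p = V^(1/mu), i.e. dV = mu V p^-1 dp, turns I into
   \int_0^(V0^(1/mu)) mu dp / (a1 p^2 - d1 p + a2).  In case (i) the quadratic is
   a1 ((p - c)^2 + k1^2) with c = d1 / (2 a1), and the integrand has the primitive
   mu / (a1 k1) * atan ((p - c) / k1).  In case (ii) it is a1 (r1 - p) (r2 - p) with
   0 < r1 <= r2; as p stays below k r1 < r1, bounding it below by
   a1 r2 (r1 - p)^2 / r1 gives the primitive B / (r1 - p), whose increment is at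
   most mu k / ((1 - k) a1 r2), and a1 r2 >= sqrt (a1 a2).  The singularity of the
   integrand at 0 is handled by monotone convergence over the intervals [e, V0]. *)

Lemma le0_integralN d (T : measurableType d) (R : realType)
    (m : {measure set T -> \bar R}) (D : set T) (f : T -> R) :
  (forall x, D x -> f x <= 0) ->
  ((- \int[m]_(x in D) (f x)%:E) = \int[m]_(x in D) (- f x)%:E)%E.
Proof.
move=> f_le0; rewrite -integralN; first by apply: eq_integral => x _; rewrite EFinN.
apply: fin_num_adde_defr; rewrite integral0_eq// => x Dx.
by rewrite (@le0_funeposE _ _ D) ?inE // => y Dy; rewrite lee_fin f_le0.
Qed.

Section improper_integral.
Context {R : realType}.
Local Notation leb := (@lebesgue_measure R).

Lemma ge0_integral_itvcc_le_primitive (a b : R) (h g G : R -> R) :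
  a < b -> measurable_fun `[a, b] h ->
  {in `[a, b], forall x, 0 <= h x <= g x} ->
  {in `[a, b], continuous g} ->
  {in `[a, b], forall x : R, is_derive x 1 G (g x)} ->
  (\int[leb]_(x in `[a, b]) (h x)%:E <= (G b - G a)%:E)%E.
Proof.
move=> ab mh hg cg dG.
have ab_in x : x \in `]a, b[ -> x \in `[a, b] by apply: subset_itv_oo_cc.
have cG x : x \in `[a, b] -> {for x, continuous G}.
  by move=> /dG [dGx _]; apply/differentiable_continuous/derivable1_diffP.
have cg_ab : {within `[a, b], continuous g}.
  by apply: continuous_in_subspaceT => x /[!inE]; exact: cg.
rewrite EFinB -(continuous_FTC2 ab cg_ab).
- apply: ge0_le_integral => //.
  + by move=> x /= /hg /andP[+ _]; rewrite lee_fin.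
  + exact/measurable_realfun.measurable_EFinP.
  + apply/measurable_realfun.measurable_EFinP.
    exact: measurable_realfun.subspace_continuous_measurable_fun.
  + by move=> x /= /hg /andP[_]; rewrite lee_fin.
- split.
  + by move=> x /ab_in /dG [].
  + by apply: cvg_at_right_filter; apply: cG; rewrite in_itv /= lexx ltW.
  + by apply: cvg_at_left_filter; apply: cG; rewrite in_itv /= lexx ltW.
- by move=> x /ab_in /dG [_ dGx]; rewrite derive1E dGx.
Qed.

Lemma ge0_integral_itvoc_le (a b : R) (C : \bar R) (h : R -> R) :
  a < b -> measurable_fun `]a, b] h -> {in `]a, b], forall x, 0 <= h x} ->
  {in `]a, b[, forall e, (\int[leb]_(x in `[e, b]) (h x)%:E <= C)%E} ->
  (\int[leb]_(x in `]a, b]) (h x)%:E <= C)%E.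
Proof.
move=> ab mh h0 hC.
pose e n := a + (b - a) / n.+2%:R.
have e_in n : e n \in `]a, b[.
  rewrite in_itv /= ltrDl divr_gt0 ?subr_gt0 ?ltr0n //= -ltrBrDl.
  by rewrite ltr_pdivrMr ?ltr0n // ltr_pMr ?subr_gt0 // ltr1n.
pose F n := `[e n, b]%classic.
have F_sub n : F n `<=` `]a, b].
  move=> x; rewrite /F /= !in_itv /= => /andP[enx ->]; rewrite andbT.
  by move: (e_in n); rewrite in_itv /= => /andP[+ _] => /lt_le_trans; apply.
have F_cover : `]a, b]%classic = \bigcup_n F n.
  apply/seteqP; split; last by move=> x [n _ /F_sub].
  move=> x /=; rewrite in_itv /= => /andP[ax xb].
  exists (Num.truncn ((b - a) / (x - a))) => //=; rewrite /F /e /= in_itv /= xb andbT.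
  rewrite -lerBrDl ler_pdivrMr ?ltr0n // -ler_pdivrMl ?subr_gt0 //.
  by rewrite mulrC; apply/ltW/(lt_trans (truncnS_gt _)); rewrite ltr_nat.
have F_nd : {homo F : n m / (n <= m)%N >-> (n <= m)%O}.
  move=> n m nm; apply/subsetPset => x; rewrite /F /e /= !in_itv /= => /andP[+ ->].
  rewrite andbT; apply: le_trans; rewrite lerD2l ler_pM2l ?subr_gt0 //.
  by rewrite lef_pV2 ?posrE ?ltr0n // ler_nat.
have cvgF : (\int[leb]_(x in F n) (h x)%:E)%E @[n --> \oo] -->
            (\int[leb]_(x in `]a, b]) (h x)%:E)%E.
  rewrite F_cover; apply: ge0_nondecreasing_set_cvg_integral => //.
  - by move=> n; exact: measurable_itv.
  - by move=> n; apply/measurable_realfun.measurable_EFinP; exact: measurable_funS mh.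
  - by move=> n x /F_sub hx; rewrite lee_fin h0 // inE.
rewrite -(cvg_lim _ cvgF) //; apply: lime_le; last by apply: nearW => n; exact: hC.
by apply/cvg_ex; eexists; exact: cvgF.
Qed.

Lemma ge0_integral_itvoc_le_primitive (a b C : R) (h g G : R -> R) :
  a < b -> {in `]a, b], continuous h} ->
  {in `]a, b], forall x, 0 <= h x <= g x} ->
  {in `]a, b], continuous g} ->
  {in `]a, b], forall x : R, is_derive x 1 G (g x)} ->
  {in `]a, b[, forall e, G b - G e <= C} ->
  (\int[leb]_(x in `]a, b]) (h x)%:E <= C%:E)%E.
Proof.
move=> ab ch hg cg dG GC.
have mh (A : set R) : A `<=` `]a, b] -> measurable A -> measurable_fun A h.
  move=> Aab mA; apply: measurable_realfun.subspace_continuous_measurable_fun => //.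
  by apply: continuous_in_subspaceT => x /[!inE] /Aab; exact: ch.
apply: ge0_integral_itvoc_le => //; first by apply: mh.
  by move=> x /hg /andP[].
move=> e /[dup] eI; rewrite in_itv /= => /andP[ae eb].
have sub : {subset `[e, b] <= `]a, b]}.
  by move=> x; rewrite !in_itv /= => /andP[ex ->]; rewrite (lt_le_trans ae ex).
apply: le_trans (@ge0_integral_itvcc_le_primitive _ _ h g G eb _ _ _ _) _.
- by apply: mh => // x /= /sub.
- by move=> x /sub; exact: hg.
- by move=> x /sub; exact: cg.
- by move=> x /sub; exact: dG.
by rewrite lee_fin GC.
Qed.

End improper_integral.

Section integralI.
Context {R : realType}.
Local Notation leb := (@lebesgue_measure R).
Local Notation rate a1 a2 d1 g1 g2 V :=
  (- a1 * V `^ g1 - a2 * V `^ g2 + d1 * V) (only parsing).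

Lemma gt0_continuous_powR (r x : R) : 0 < x ->
  {for x, continuous (fun y : R => y `^ r)}.
Proof.
move=> x0; apply/differentiable_continuous/derivable1_diffP.
by apply: derivable_powR; rewrite in_itv /= x0.
Qed.

Lemma gt0_continuous_rate (a1 a2 d1 g1 g2 x : R) : 0 < x ->
  {for x, continuous (fun V : R => rate a1 a2 d1 g1 g2 V)}.
Proof.
move=> x0; apply: continuousD; first apply: continuousB.
- by apply: continuousM; [exact: cst_continuous | exact: gt0_continuous_powR].
- by apply: continuousM; [exact: cst_continuous | exact: gt0_continuous_powR].
- by apply: continuousM; [exact: cst_continuous | exact: cvg_id].
Qed.

Lemma derivable_continuous_divr (A : R) (f : R -> R) (x : R) :
  f x != 0 -> derivable f x 1 -> {for x, continuous (fun y => A / f y)}.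
Proof.
move=> fx0 df; apply: continuousM; first exact: cst_continuous.
by apply: continuousV => //; exact/differentiable_continuous/derivable1_diffP.
Qed.

Lemma powR_itvoc0 (b r : R) : 0 <= r -> {in `]0, b], forall x, x `^ r \in `]0, b `^ r]}.
Proof.
move=> r_ge0 x; rewrite !in_itv /= => /andP[x0 xb]; rewrite powR_gt0 //=.
by apply: ge0_ler_powR => //; rewrite nnegrE ltW // (lt_le_trans x0).
Qed.

Lemma powR_itvoo0 (b r : R) : 0 < r -> {in `]0, b[, forall x, x `^ r \in `]0, b `^ r[}.
Proof.
move=> r_gt0 x; rewrite !in_itv /= => /andP[x0 xb]; rewrite powR_gt0 //=.
by apply: gt0_ltr_powR => //; rewrite ?nnegrE ltW // (lt_trans x0).
Qed.

(* The change of variables p = x^(1/mu): the last factor is dp/dx. *)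
Lemma inv_rate_powRE (a1 a2 d1 mu x : R) : 0 < x -> mu != 0 ->
  a1 * x `^ mu^-1 ^+ 2 - d1 * x `^ mu^-1 + a2 != 0 ->
  - (rate a1 a2 d1 (1 + mu^-1) (1 - mu^-1) x)^-1 =
  mu / (a1 * x `^ mu^-1 ^+ 2 - d1 * x `^ mu^-1 + a2) * (mu^-1 * x `^ (mu^-1 - 1)).
Proof.
move=> x0 mu0 q0; have px := powR_gt0 mu^-1 x0.
have x_neq0 : x != 0 by rewrite gt_eqF.
rewrite powRD ?powRr1 ?(ltW x0) // ?x_neq0 ?implybT //.
rewrite powRB ?powRr1 ?(ltW x0) // ?x_neq0 ?implybT //.
rewrite powRB ?powRr1 ?(ltW x0) // ?x_neq0 ?implybT //.
set p := x `^ mu^-1 in px q0 *.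
have -> : - a1 * (x * p) - a2 * (x / p) + d1 * x =
          - (x / p) * (a1 * p ^+ 2 - d1 * p + a2) by field; rewrite gt_eqF.
by field; rewrite mu0 q0 !gt_eqF.
Qed.

Lemma integralI_le_primitive (V0 a1 a2 d1 mu C : R) (Phi phi : R -> R) :
  0 < V0 -> 0 < mu ->
  {in `]0, V0 `^ mu^-1], forall p, 0 < a1 * p ^+ 2 - d1 * p + a2} ->
  {in `]0, V0 `^ mu^-1], forall p, mu / (a1 * p ^+ 2 - d1 * p + a2) <= phi p} ->
  {in `]0, V0 `^ mu^-1], continuous phi} ->
  {in `]0, V0 `^ mu^-1], forall p : R, is_derive p 1 Phi (phi p)} ->
  {in `]0, V0 `^ mu^-1[, forall p, Phi (V0 `^ mu^-1) - Phi p <= C} ->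
  (integralI V0 a1 a2 d1 (1 + mu^-1) (1 - mu^-1) <= C%:E)%E.
Proof.
move=> V0_gt0 mu_gt0 q_gt0 phi_ge cphi dPhi PhiC.
have mu_inv_gt0 : 0 < mu^-1 by rewrite invr_gt0.
pose P x := x `^ mu^-1.
pose dP x := mu^-1 * x `^ (mu^-1 - 1).
pose h x := - (rate a1 a2 d1 (1 + mu^-1) (1 - mu^-1) x)^-1.
pose g x := phi (P x) * dP x.
have P_in := powR_itvoc0 V0 mu^-1 (ltW mu_inv_gt0).
have dP_gt0 x : 0 < x -> 0 < dP x by move=> x0; rewrite mulr_gt0 ?powR_gt0.
have h_gt0 x : x \in `]0, V0] -> 0 < h x.
  move=> /[dup] /P_in /q_gt0 q0; rewrite in_itv /= => /andP[x0 _].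
  by rewrite /h inv_rate_powRE ?gt_eqF // mulr_gt0 ?divr_gt0 ?dP_gt0.
have h_le_g x : x \in `]0, V0] -> 0 <= h x <= g x.
  move=> /[dup] xI /[dup] /P_in Px; rewrite in_itv /= => /andP[x0 _].
  rewrite ltW ?h_gt0 // /h inv_rate_powRE ?gt_eqF ?q_gt0 //.
  by rewrite ler_wpM2r ?phi_ge // ltW ?dP_gt0.
have ch x : x \in `]0, V0] -> {for x, continuous h}.
  move=> /[dup] /h_gt0; rewrite oppr_gt0 invr_lt0 => /lt_eqF rate0.
  rewrite in_itv /= => /andP[x0 _].
  apply: continuousN; apply: continuousV; first by rewrite rate0.
  exact: gt0_continuous_rate.
have cg x : x \in `]0, V0] -> {for x, continuous g}.
  move=> /[dup] /P_in Px; rewrite in_itv /= => /andP[x0 _].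
  apply: continuousM; last first.
    by apply: continuousM; [exact: cst_continuous | exact: gt0_continuous_powR].
  by apply: continuous_comp; [exact: gt0_continuous_powR | exact: cphi].
have dG x : x \in `]0, V0] -> is_derive x 1 (Phi \o P) (g x).
  move=> /[dup] /P_in Px; rewrite in_itv /= => /andP[x0 _].
  exact: (@is_derive1_comp _ Phi P x _ _ (dPhi _ Px) (is_derive1_powR mu^-1 x0)).
have -> : integralI V0 a1 a2 d1 (1 + mu^-1) (1 - mu^-1) =
          (\int[leb]_(x in `]0%R, V0]) (h x)%:E)%E.
  by rewrite /integralI le0_integralN // => x /h_gt0; rewrite oppr_gt0 => /ltW.
apply: (@ge0_integral_itvoc_le_primitive _ _ _ _ h g (Phi \o P)) => // e.
by move=> /(powR_itvoo0 V0 mu^-1 mu_inv_gt0); exact: PhiC.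
Qed.

Lemma trinomial_complex_roots (a1 a2 d1 : R) :
  0 < a1 -> 0 < 4 * a1 * a2 - d1 ^+ 2 ->
  let c := d1 / (2 * a1) in
  let k := Num.sqrt ((4 * a1 * a2 - d1 ^+ 2) / (4 * a1 ^+ 2)) in
  [/\ 0 < k, d1 = 2 * a1 * c, a2 = a1 * (c ^+ 2 + k ^+ 2)
    & - (d1 / Num.sqrt (4 * a1 * a2 - d1 ^+ 2)) = - c / k].
Proof.
move=> a1_gt0 D_gt0 c k.
have a1sq_gt0 : 0 < 4 * a1 ^+ 2 by rewrite mulr_gt0 // exprn_gt0.
have kE : k ^+ 2 = (4 * a1 * a2 - d1 ^+ 2) / (4 * a1 ^+ 2).
  by rewrite sqr_sqrtr // ltW // divr_gt0.
split.
- by rewrite sqrtr_gt0 divr_gt0.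
- by rewrite /c; field; rewrite gt_eqF.
- by rewrite kE /c; field; rewrite gt_eqF.
rewrite /k /c sqrtrM ?ltW // sqrtrV ?ltW // (_ : 4 * a1 ^+ 2 = (2 * a1) ^+ 2).
  have sD : 0 < Num.sqrt (4 * a1 * a2 - d1 ^+ 2) by rewrite sqrtr_gt0.
  by rewrite sqrtr_sqr ger0_norm ?mulr_ge0 ?ltW //; field; rewrite !gt_eqF.
by ring.
Qed.

Lemma trinomial_real_roots (a1 a2 d1 : R) :
  0 < a1 -> 0 < a2 -> 2 * Num.sqrt (a1 * a2) <= d1 ->
  let s := Num.sqrt (d1 ^+ 2 - 4 * a1 * a2) in
  let r1 := (d1 - s) / (2 * a1) in
  let r2 := (d1 + s) / (2 * a1) in
  [/\ 0 < r1 <= r2, d1 = a1 * (r1 + r2), a2 = a1 * r1 * r2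
    & Num.sqrt (a1 * a2) <= a1 * r2].
Proof.
move=> a1_gt0 a2_gt0 d1_ge s r1 r2.
have sa_gt0 : 0 < Num.sqrt (a1 * a2) by rewrite sqrtr_gt0 mulr_gt0.
have saE := sqr_sqrtr (ltW (mulr_gt0 a1_gt0 a2_gt0)).
have D_ge0 : 0 <= d1 ^+ 2 - 4 * a1 * a2 by nra.
have sE : s ^+ 2 = d1 ^+ 2 - 4 * a1 * a2 by exact: sqr_sqrtr.
have s_ge0 : 0 <= s := sqrtr_ge0 _.
have s_lt : s < d1 by nra.
split.
- rewrite !divr_gt0 ?mulr_gt0 ?subr_gt0 //=.
  by rewrite ler_pM2r ?invr_gt0 ?mulr_gt0 // lerD2l; lra.
- by rewrite /r1 /r2; field; rewrite gt_eqF.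
- transitivity ((d1 ^+ 2 - s ^+ 2) / (4 * a1)).
    by rewrite sE; field; rewrite gt_eqF.
  by rewrite /r1 /r2; field; rewrite gt_eqF.
have -> : a1 * r2 = (d1 + s) / 2 by rewrite /r2; field; rewrite gt_eqF.
lra.
Qed.

Lemma integralI_le_atan (V0 a1 a2 d1 mu c k : R) :
  0 < V0 -> 0 < a1 -> 0 < mu -> 0 < k ->
  d1 = 2 * a1 * c -> a2 = a1 * (c ^+ 2 + k ^+ 2) ->
  (integralI V0 a1 a2 d1 (1 + mu^-1) (1 - mu^-1) <=
     (mu / (a1 * k) * (pi / 2 - atan (- c / k)))%:E)%E.
Proof.
move=> V0_gt0 a1_gt0 mu_gt0 k_gt0 -> ->.
have Q_gt0 p : 0 < a1 * ((p - c) ^+ 2 + k ^+ 2).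
  by rewrite mulr_gt0 // ltr_wpDl ?sqr_ge0 ?exprn_gt0.
have qE p : a1 * p ^+ 2 - 2 * a1 * c * p + a1 * (c ^+ 2 + k ^+ 2) =
            a1 * ((p - c) ^+ 2 + k ^+ 2) by ring.
apply: (@integralI_le_primitive _ _ _ _ _ _
  (fun p => mu / (a1 * k) * atan ((p - c) / k))
  (fun p => mu / (a1 * ((p - c) ^+ 2 + k ^+ 2)))) => // [p _|p _|p _|p _|p].
- by rewrite qE Q_gt0.
- by rewrite qE.
- apply: (@derivable_continuous_divr mu (fun p => a1 * ((p - c) ^+ 2 + k ^+ 2)) p).
    by rewrite gt_eqF ?Q_gt0.
  exact: ex_derive.
- have dlin : is_derive p 1 (fun q : R => (q - c) / k) k^-1.
    by apply: is_derive_eq; rewrite scaler0 add0r subr0; exact: mulr1.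
  have datan := @is_derive1_comp _ atan (fun q => (q - c) / k) p _ _
    (is_derive1_atan _) dlin.
  apply: is_derive_eq; rewrite -[_ *: _]/(mu / (a1 * k) * _).
  by field; rewrite !gt_eqF // ?ltr_wpDl ?sqr_ge0 ?exprn_gt0.
rewrite in_itv /= => /andP[p_gt0 _].
rewrite -mulrBr ler_pM2l ?divr_gt0 ?mulr_gt0 //.
apply: lerB; first exact/ltW/atan_ltpi2.
by apply: le_atan; rewrite -?mulNr ler_pM2r ?invr_gt0 //; lra.
Qed.

Lemma integralI_le_real_roots (V0 a1 a2 d1 mu r1 r2 k : R) :
  0 < V0 -> 0 < a1 -> 0 < mu -> 0 < r1 <= r2 -> 0 < k < 1 ->
  d1 = a1 * (r1 + r2) -> a2 = a1 * r1 * r2 -> V0 `^ mu^-1 <= k * r1 ->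
  (integralI V0 a1 a2 d1 (1 + mu^-1) (1 - mu^-1) <=
     (mu * k / ((1 - k) * (a1 * r2)))%:E)%E.
Proof.
move=> V0_gt0 a1_gt0 mu_gt0 /andP[r1_gt0 r12] /andP[k_gt0 k_lt1] -> -> P0_le.
have r2_gt0 : 0 < r2 := lt_le_trans r1_gt0 r12.
have P0_lt : V0 `^ mu^-1 < r1 by apply: le_lt_trans P0_le _; rewrite gtr_pMl.
have p_lt p : p \in `]0, V0 `^ mu^-1] -> 0 < p < r1.
  by rewrite in_itv /= => /andP[-> /le_lt_trans]; apply.
have qE p : a1 * p ^+ 2 - a1 * (r1 + r2) * p + a1 * r1 * r2 =
            a1 * (r1 - p) * (r2 - p) by ring.
pose B := mu * r1 / (a1 * r2).
have B_gt0 : 0 < B by rewrite !divr_gt0 ?mulr_gt0.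
apply: (@integralI_le_primitive _ _ _ _ _ _
  (fun p => B / (r1 - p)) (fun p => B / (r1 - p) ^+ 2))
  => // [p /p_lt/andP[p0 pr]|p /p_lt/andP[p0 pr]|p /p_lt/andP[p0 pr]
        |p /p_lt/andP[p0 pr]|p].
- by rewrite qE !mulr_gt0 // subr_gt0 // (lt_le_trans pr r12).
- have r2p : 0 < r2 - p by rewrite subr_gt0 (lt_le_trans pr r12).
  have r1p : 0 < r1 - p by rewrite subr_gt0.
  rewrite qE -subr_ge0.
  have -> : B / (r1 - p) ^+ 2 - mu / (a1 * (r1 - p) * (r2 - p)) =
            mu * p * (r2 - r1) / (a1 * r2 * (r1 - p) ^+ 2 * (r2 - p)).
    by rewrite /B; field; rewrite !gt_eqF.
  apply: divr_ge0; first by rewrite !mulr_ge0 ?subr_ge0 // ltW.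
  by rewrite ltW // !mulr_gt0 // exprn_gt0.
- apply: (@derivable_continuous_divr B (fun p => (r1 - p) ^+ 2) p) => //.
  by rewrite gt_eqF // exprn_gt0 // subr_gt0.
- have r1p : r1 - p != 0 by rewrite gt_eqF // subr_gt0.
  have dinv := @is_deriveV _ (fun q => r1 - q) p _ 1 r1p _.
  apply: is_derive_eq.
  rewrite -[_ *: _]/(B * (- (r1 - p) ^- 2 * ((0 + 1) * -1))).
  by field.
rewrite in_itv /= => /andP[p0 pP0].
set P0 := V0 `^ mu^-1 in P0_le P0_lt pP0 *.
apply: le_trans (_ : B / (r1 - P0) - B / r1 <= _).
  rewrite lerD2l lerN2 ler_pM2l // lef_pV2 ?posrE ?subr_gt0 ?(lt_trans pP0) //.
  by rewrite gerBl ltW.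
have -> : B / (r1 - P0) - B / r1 = mu / (a1 * r2) * (P0 / (r1 - P0)).
  by rewrite /B; field; rewrite !gt_eqF ?subr_gt0.
have -> : mu * k / ((1 - k) * (a1 * r2)) = mu / (a1 * r2) * (k / (1 - k)).
  by field; rewrite !gt_eqF ?subr_gt0.
rewrite ler_pM2l ?divr_gt0 ?mulr_gt0 //.
by rewrite ler_pdivrMr ?subr_gt0 // mulrAC ler_pdivlMr ?subr_gt0 //; nra.
Qed.

End integralI.

Theorem lemma2 (R : realType) (V0 a1 a2 d1 mu : R) :
  0 < V0 -> 0 < a1 -> 0 < a2 -> 1 < mu ->
  let g1 := 1 + mu^-1 in
  let g2 := 1 - mu^-1 in
  let I := integralI V0 a1 a2 d1 g1 g2 in
  ((0 <= d1 -> d1 < 2 * Num.sqrt (a1 * a2) ->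
    let k1 := Num.sqrt ((4 * a1 * a2 - d1 ^+ 2) / (4 * a1 ^+ 2)) in
    let k2 := - (d1 / Num.sqrt (4 * a1 * a2 - d1 ^+ 2)) in
    (I <= (mu / (a1 * k1) * (pi / 2 - atan k2))%:E)%E)
  /\
  (forall k : R, 0 < k < 1 ->
    2 * Num.sqrt (a1 * a2) <= d1 ->
    V0 `^ (mu^-1) <= k * ((d1 - Num.sqrt (d1 ^+ 2 - 4 * a1 * a2)) / (2 * a1)) ->
    (I <= (mu * k / ((1 - k) * Num.sqrt (a1 * a2)))%:E)%E)).
Proof.
move=> V0_gt0 a1_gt0 a2_gt0 mu_gt1 g1 g2 I.
have mu_gt0 : 0 < mu := lt_trans ltr01 mu_gt1.
split.
- move=> d1_ge0 d1_lt /=.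
  have D_gt0 : 0 < 4 * a1 * a2 - d1 ^+ 2.
    have := sqr_sqrtr (ltW (mulr_gt0 a1_gt0 a2_gt0)); have := sqrtr_ge0 (a1 * a2).
    nra.
  have [k1_gt0 d1E a2E ->] := trinomial_complex_roots a1 a2 d1 a1_gt0 D_gt0.
  by apply: integralI_le_atan.
- move=> k k01 d1_ge P0_le.
  have [r12 d1E a2E sqrt_le] := trinomial_real_roots a1 a2 d1 a1_gt0 a2_gt0 d1_ge.
  have := integralI_le_real_roots V0 a1 a2 d1 mu _ _ k
    V0_gt0 a1_gt0 mu_gt0 r12 k01 d1E a2E P0_le.
  move/le_trans; apply.
  have [k_gt0 k_lt1] := andP k01.
  have sa_gt0 : 0 < Num.sqrt (a1 * a2) by rewrite sqrtr_gt0 mulr_gt0.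
  have X_gt0 := lt_le_trans sa_gt0 sqrt_le.
  have k'_gt0 : 0 < 1 - k by rewrite subr_gt0.
  rewrite lee_fin; apply: ler_wpM2l; first by rewrite mulr_ge0 // ltW.
  by rewrite lef_pV2 ?posrE ?(mulr_gt0 k'_gt0) // ler_wpM2l // ltW.
Qed.
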